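(* Assume the standing setting, let $\epsilon>0$, fix a coarse index $j$ and an integer $m$ with $r/2\le m\le r$. If $|u^0_i-u^0_{i+1}|\le \epsilon/3^{M}$ for all $i\in\mathbb Z$, then $|u^M_{jr+m}-u^M_{(j+1)r}|\le (r-m)\epsilon$.
   Context: Standing setting. Let $F:\mathbb R\to\mathbb R$ be continuously differentiable. For a spatial step $\eta>0$, a time step $\tau>0$ and an initial sequence $(z^0_i)_{i\in\mathbb Z}$ of reals, the EFC (Euler forward in time, centered in space) scheme produces $(z^n_i)_{i\in\mathbb Z,\,n\in\mathbb N}$ by $z^{n+1}_i=z^n_i-F'(z^n_i)\frac{\tau}{2\eta}\,(z^n_{i+1}-z^n_{i-1})$. It satisfies the CFL condition if $|F'(z^n_i)|\,\tau/\eta\le 1$ for all $i\in\mathbb Z$, $n\in\mathbb N$. Fix $a\in\mathbb R$, $h>0$, $\Delta t>0$, an integer $N>1$ and an even integer $r\ge 2$; put $k=h/r$, $dt=\Delta t/r$, $M=Nr$. Let $u_0:\mathbb R\to\mathbb R$. The coarse solution $(w^n_j)$ is the EFC scheme with $\eta=h$, $\tau=\Delta t$, $w^0_j=u_0(a+jh)$; the fine solution $(u^n_i)$ is the EFC scheme with $\eta=k$, $\tau=dt$, $u^0_i=u_0(a+ik)$ (so $w^0_j=u^0_{jr}$). Both are assumed to satisfy the CFL condition. *)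

From Stdlib Require Import Reals ZArith Lra.
Open Scope R_scope.

(* EFC scheme (Euler forward in time, centered in space) with derivative
   function dF (= F'), spatial step eta, time step tau, initial data z0.
   efc dF eta tau z0 n i = z^n_i. *)
Fixpoint efc (dF : R -> R) (eta tau : R) (z0 : Z -> R) (n : nat) : Z -> R :=
  match n with
  | O => z0
  | S n' => fun i =>
      let z := efc dF eta tau z0 n' in
      z i - dF (z i) * (tau / (2 * eta)) * (z (i + 1)%Z - z (i - 1)%Z)
  end.

Definition CFL (dF : R -> R) (eta tau : R) (z0 : Z -> R) : Prop :=
  forall (n : nat) (i : Z), Rabs (dF (efc dF eta tau z0 n i)) * tau / eta <= 1.

(* Under the CFL condition each coefficient F'(z) tau/(2 eta) of the EFC
   scheme has modulus at most 1/2, so one time step can at most triple a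
   bound on consecutive differences.  After M = N r steps the initial bound
   eps/3^M has therefore grown to eps, and summing the r - m consecutive
   differences between fine indices jr + m and (j+1)r gives the estimate. *)

From Stdlib Require Import Reals ZArith Lra Lia.
Open Scope R_scope.

Lemma Rabs_half_mul_le (c x D : R) :
  Rabs c <= 1/2 -> Rabs x <= 2 * D -> Rabs (c * x) <= D.
Proof.
  intros Hc Hx. rewrite Rabs_mult.
  assert (Rabs c * Rabs x <= 1/2 * (2 * D))
    by (apply Rmult_le_compat; auto using Rabs_pos).
  lra.
Qed.

Lemma centered_step_diff_le (c1 c2 a0 a1 a2 a3 D : R) :
  Rabs c1 <= 1/2 -> Rabs c2 <= 1/2 ->
  Rabs (a0 - a1) <= D -> Rabs (a1 - a2) <= D -> Rabs (a2 - a3) <= D ->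
  Rabs ((a1 - c1 * (a2 - a0)) - (a2 - c2 * (a3 - a1))) <= 3 * D.
Proof.
  intros Hc1 Hc2 H01 H12 H23.
  set (d0 := a1 - a0); set (d1 := a2 - a1); set (d2 := a3 - a2).
  replace ((a1 - c1 * (a2 - a0)) - (a2 - c2 * (a3 - a1)))
    with (- d1 + - (c1 * (d1 + d0)) + c2 * (d2 + d1)) by (subst d0 d1 d2; ring).
  assert (Hd0 : Rabs d0 <= D) by (subst d0; rewrite Rabs_minus_sym; exact H01).
  assert (Hd1 : Rabs d1 <= D) by (subst d1; rewrite Rabs_minus_sym; exact H12).
  assert (Hd2 : Rabs d2 <= D) by (subst d2; rewrite Rabs_minus_sym; exact H23).
  assert (Hsum10 : Rabs (d1 + d0) <= 2 * D)
    by (eapply Rle_trans; [apply Rabs_triang | lra]).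
  assert (Hsum21 : Rabs (d2 + d1) <= 2 * D)
    by (eapply Rle_trans; [apply Rabs_triang | lra]).
  pose proof (Rabs_half_mul_le _ _ _ Hc1 Hsum10).
  pose proof (Rabs_half_mul_le _ _ _ Hc2 Hsum21).
  pose proof (Rabs_triang (- d1 + - (c1 * (d1 + d0))) (c2 * (d2 + d1))).
  pose proof (Rabs_triang (- d1) (- (c1 * (d1 + d0)))).
  rewrite 2!Rabs_Ropp in *.
  lra.
Qed.

Lemma CFL_coef_le dF eta tau z0 :
  0 < eta -> 0 < tau -> CFL dF eta tau z0 ->
  forall n i, Rabs (dF (efc dF eta tau z0 n i) * (tau / (2 * eta))) <= 1/2.
Proof.
  intros Heta Htau HC n i.
  rewrite Rabs_mult, (Rabs_right (tau / (2 * eta)))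
    by (apply Rle_ge, Rlt_le, Rdiv_lt_0_compat; lra).
  replace (Rabs (dF (efc dF eta tau z0 n i)) * (tau / (2 * eta)))
    with (Rabs (dF (efc dF eta tau z0 n i)) * tau / eta / 2) by (field; lra).
  pose proof (HC n i). lra.
Qed.

Lemma efc_diff_le dF eta tau z0 D :
  0 < eta -> 0 < tau -> CFL dF eta tau z0 ->
  (forall i, Rabs (z0 i - z0 (i + 1)%Z) <= D) ->
  forall n i,
    Rabs (efc dF eta tau z0 n i - efc dF eta tau z0 n (i + 1)%Z) <= 3 ^ n * D.
Proof.
  intros Heta Htau HC H0 n; induction n as [|n IH]; intros i.
  - rewrite Rmult_1_l. apply H0.
  - simpl efc. replace (3 ^ S n * D) with (3 * (3 ^ n * D)) by (simpl; ring).
    replace (i + 1 - 1)%Z with i by lia.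
    pose proof (CFL_coef_le _ _ _ _ Heta Htau HC n) as Hcoef.
    apply centered_step_diff_le; [apply Hcoef | apply Hcoef | | apply IH | apply IH].
    replace i with (i - 1 + 1)%Z at 2 by lia. apply IH.
Qed.

Lemma Rabs_diff_shift_le (u : Z -> R) (D : R) :
  (forall i, Rabs (u i - u (i + 1)%Z) <= D) ->
  forall (k : nat) (p : Z), Rabs (u p - u (p + Z.of_nat k)%Z) <= INR k * D.
Proof.
  intros Hu k; induction k as [|k IH]; intros p.
  - rewrite Z.add_0_r, Rminus_diag, Rabs_R0, Rmult_0_l. apply Rle_refl.
  - replace (u p - u (p + Z.of_nat (S k))%Z)
      with ((u p - u (p + Z.of_nat k)%Z)
            + (u (p + Z.of_nat k)%Z - u (p + Z.of_nat k + 1)%Z))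
      by (replace (p + Z.of_nat (S k))%Z with (p + Z.of_nat k + 1)%Z by lia; ring).
    rewrite S_INR.
    pose proof (Rabs_triang (u p - u (p + Z.of_nat k)%Z)
                  (u (p + Z.of_nat k)%Z - u (p + Z.of_nat k + 1)%Z)).
    pose proof (IH p). pose proof (Hu (p + Z.of_nat k)%Z).
    lra.
Qed.

Theorem proposition10
  (F dF : R -> R)
  (HF : forall x, derivable_pt_lim F x (dF x))
  (HdF : forall x, continuity_pt dF x)
  (a h Dt : R) (N r : nat) (u0 : R -> R)
  (Hh : 0 < h) (HDt : 0 < Dt) (HN : (1 < N)%nat)
  (Hr2 : (2 <= r)%nat) (Hreven : Nat.Even r)
  (HCFLc : CFL dF h Dt (fun j : Z => u0 (a + IZR j * h)))
  (HCFLf : CFL dF (h / INR r) (Dt / INR r)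
             (fun i : Z => u0 (a + IZR i * (h / INR r))))
  (eps : R) (Heps : 0 < eps) (j : Z) (m : nat)
  (Hm1 : (r <= 2 * m)%nat) (Hm2 : (m <= r)%nat)
  (Hsmall : forall i : Z,
      Rabs (u0 (a + IZR i * (h / INR r)) - u0 (a + IZR (i + 1) * (h / INR r)))
        <= eps / 3 ^ (N * r)) :
  let u := efc dF (h / INR r) (Dt / INR r)
             (fun i : Z => u0 (a + IZR i * (h / INR r))) (N * r) in
  Rabs (u (j * Z.of_nat r + Z.of_nat m)%Z - u ((j + 1) * Z.of_nat r)%Z)
    <= (INR r - INR m) * eps.
Proof.
  intros u.
  assert (Hr : 0 < INR r) by (apply lt_0_INR; lia).
  assert (Hu : forall i, Rabs (u i - u (i + 1)%Z) <= eps).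
  { intros i.
    replace eps with (3 ^ (N * r) * (eps / 3 ^ (N * r)))
      by (field; apply pow_nonzero; lra).
    apply efc_diff_le; auto; apply Rdiv_lt_0_compat; lra. }
  pose proof (Rabs_diff_shift_le u eps Hu (r - m) (j * Z.of_nat r + Z.of_nat m))
    as Hshift.
  replace (j * Z.of_nat r + Z.of_nat m + Z.of_nat (r - m))%Z
    with ((j + 1) * Z.of_nat r)%Z in Hshift by lia.
  rewrite minus_INR in Hshift by lia.
  exact Hshift.
Qed.
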